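(* In the setting described in the context, let $d\in\mathcal{B}_2$ be a metric on $A$. Then the function $$\sigma(x,y)=d(x,\cdot)+d(y,\cdot)-d(x,y)-d(\cdot,\cdot)+m$$ is a $\Sigma_m$-proximity on $A$.
   Context: $A$ is a nonempty set (possibly infinite); $m\in\mathbb{R}$. A metric on $A$ is a function $d:A^2\to\mathbb{R}$ such that for all $x,y,z\in A$: $d(x,y)=0$ iff $x=y$, and $d(x,y)+d(x,z)-d(y,z)\ge0$ (metrics are symmetric). $\mathcal{B}_1$ is a set of functions $A\to\mathbb{R}$ forming a real linear space containing all constant functions, and $\mu:\mathcal{B}_1\to\mathbb{R}$ is a linear functional with $\mu(c)=c$ for every constant function $c$ and monotone: if $f,g\in\mathcal{B}_1$ and $f\ge g$ pointwise, then $\mu(f)\ge\mu(g)$. For $f:A^2\to\mathbb{R}$ such that $y\mapsto f(x,y)$ lies in $\mathcal{B}_1$ for every $x$, write $f(x,\cdot)=\mu(y\mapsto f(x,y))$, a function of $x$. $\mathcal{B}_2$ is a set of functions $A^2\to\mathbb{R}$ forming a real linear space that contains all constant functions and all functions $(x,y)\mapsto h(x)$ and $(x,y)\mapsto h(y)$ with $h\in\mathcal{B}_1$, and such that for every $f\in\mathcal{B}_2$: $y\mapsto f(x,y)\in\mathcal{B}_1$ for every $x$, $x\mapsto f(x,\cdot)\in\mathcal{B}_1$, and $x\mapsto f(x,x)\in\mathcal{B}_1$. For a symmetric $d\in\mathcal{B}_2$, $d(\cdot,\cdot)=\mu(x\mapsto d(x,\cdot))$ (a real number). A function $\sigma\in\mathcal{B}_2$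 is a $\Sigma_m$-proximity on $A$ if for all $x,y,z\in A$: (1) $\sigma(x,\cdot)=m$; (2) $\sigma(x,y)+\sigma(x,z)-\sigma(y,z)\le\sigma(x,x)$, with strict inequality whenever $z=y$ and $x\ne y$. *)

From Stdlib Require Import Reals.
Open Scope R_scope.

Definition linear_space1 {A : Type} (B1 : (A -> R) -> Prop) : Prop :=
  (forall f g a b, B1 f -> B1 g -> B1 (fun x => a * f x + b * g x)) /\
  (forall c : R, B1 (fun _ => c)).

Definition mean_functional {A : Type} (B1 : (A -> R) -> Prop) (mu : (A -> R) -> R) : Prop :=
  (forall f g a b, B1 f -> B1 g ->
      mu (fun x => a * f x + b * g x) = a * mu f + b * mu g) /\
  (forall c : R, mu (fun _ => c) = c) /\
  (forall f g, B1 f -> B1 g -> (forall x, g x <= f x) -> mu g <= mu f).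

(* f(x,.) = mu (y |-> f(x,y)), a function of x *)
Definition row {A : Type} (mu : (A -> R) -> R) (f : A -> A -> R) : A -> R :=
  fun x => mu (fun y => f x y).

(* d(.,.) = mu (x |-> d(x,.)) *)
Definition total {A : Type} (mu : (A -> R) -> R) (f : A -> A -> R) : R :=
  mu (row mu f).

Definition space2 {A : Type} (B1 : (A -> R) -> Prop) (mu : (A -> R) -> R)
  (B2 : (A -> A -> R) -> Prop) : Prop :=
  (forall f g a b, B2 f -> B2 g -> B2 (fun x y => a * f x y + b * g x y)) /\
  (forall c : R, B2 (fun _ _ => c)) /\
  (forall h, B1 h -> B2 (fun x _ => h x)) /\
  (forall h, B1 h -> B2 (fun _ y => h y)) /\
  (forall f, B2 f ->
     (forall x, B1 (fun y => f x y)) /\ B1 (row mu f) /\ B1 (fun x => f x x)).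

Definition is_metric {A : Type} (d : A -> A -> R) : Prop :=
  (forall x y, d x y = 0 <-> x = y) /\
  (forall x y, d x y = d y x) /\
  (forall x y z, d x y + d x z - d y z >= 0).

Definition sigma_proximity {A : Type} (B2 : (A -> A -> R) -> Prop)
  (mu : (A -> R) -> R) (m : R) (s : A -> A -> R) : Prop :=
  B2 s /\
  (forall x, row mu s x = m) /\
  (forall x y z, s x y + s x z - s y z <= s x x) /\
  (forall x y, x <> y -> s x y + s x y - s y y < s x x).

From Stdlib Require Import Reals Lra FunctionalExtensionality.
Open Scope R_scope.

(* For s(x,y) = d(x,.) + d(y,.) - d(x,y) - d(.,.) + m, the terms d(x,.), d(.,.)
   and m cancel in s x y + s x z - s y z - s x x, leaving
   d x x + d y z - d x y - d x z; so condition (2) is just the triangle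
   inequality and positivity of d.  Condition (1) is linearity of the mean:
   averaging y |-> d(x,y) gives d(x,.) and averaging y |-> d(y,.) gives d(.,.). *)

Section MetricFacts.

Context {A : Type} {d : A -> A -> R}.
Hypothesis Hd : is_metric d.

Lemma metric_refl x : d x x = 0.
Proof. destruct Hd as [Hzero _]; apply Hzero; reflexivity. Qed.

Lemma metric_triangle x y z : d y z <= d x y + d x z.
Proof. destruct Hd as [_ [_ Htri]]; specialize (Htri x y z); lra. Qed.

Lemma metric_pos x y : x <> y -> 0 < d x y.
Proof.
  intro Hxy.
  assert (Hge : 0 <= d x y).
  { pose proof (metric_triangle x y y); rewrite metric_refl in *; lra. }
  assert (Hne : d x y <> 0).
  { destruct Hd as [Hzero _]; intro H; apply Hxy, Hzero, H. }
  lra.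
Qed.

End MetricFacts.

Section FunctionSpaces.

Context {A : Type} {B1 : (A -> R) -> Prop} {mu : (A -> R) -> R}
  {B2 : (A -> A -> R) -> Prop}.

Lemma space2_add : space2 B1 mu B2 ->
  forall f g, B2 f -> B2 g -> B2 (fun x y => f x y + g x y).
Proof.
  intros [Hlin _] f g Hf Hg.
  replace (fun x y => f x y + g x y) with (fun x y => 1 * f x y + 1 * g x y)
    by (do 2 (apply functional_extensionality; intro); ring).
  now apply Hlin.
Qed.

Lemma space2_sub : space2 B1 mu B2 ->
  forall f g, B2 f -> B2 g -> B2 (fun x y => f x y - g x y).
Proof.
  intros [Hlin _] f g Hf Hg.
  replace (fun x y => f x y - g x y) with (fun x y => 1 * f x y + -1 * g x y)
    by (do 2 (apply functional_extensionality; intro); ring).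
  now apply Hlin.
Qed.

Lemma space2_slice : space2 B1 mu B2 ->
  forall f, B2 f -> forall x, B1 (fun y => f x y).
Proof. intros HB2 f Hf; apply (proj2 (proj2 (proj2 (proj2 HB2))) f Hf). Qed.

Lemma space2_row : space2 B1 mu B2 -> forall f, B2 f -> B1 (row mu f).
Proof. intros HB2 f Hf; apply (proj2 (proj2 (proj2 (proj2 HB2))) f Hf). Qed.

Hypothesis HB1 : linear_space1 B1.

Lemma space1_sub f g : B1 f -> B1 g -> B1 (fun x => f x - g x).
Proof.
  intros Hf Hg; destruct HB1 as [Hlin _].
  replace (fun x => f x - g x) with (fun x => 1 * f x + -1 * g x)
    by (apply functional_extensionality; intro; ring).
  now apply Hlin.
Qed.

Hypothesis Hmu : mean_functional B1 mu.

Lemma mean_sub f g : B1 f -> B1 g -> mu (fun x => f x - g x) = mu f - mu g.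
Proof.
  intros Hf Hg; destruct Hmu as [Hlin _].
  replace (fun x => f x - g x) with (fun x => 1 * f x + -1 * g x)
    by (apply functional_extensionality; intro; ring).
  rewrite Hlin by assumption; ring.
Qed.

Lemma mean_addr f c : B1 f -> mu (fun x => f x + c) = mu f + c.
Proof.
  intro Hf; destruct Hmu as [Hlin [Hconst _]]; destruct HB1 as [_ HB1c].
  replace (fun x => f x + c) with (fun x => 1 * f x + 1 * (fun _ => c) x)
    by (apply functional_extensionality; intro; ring).
  rewrite Hlin, Hconst by auto; ring.
Qed.

End FunctionSpaces.

Definition metric_proximity {A : Type} (mu : (A -> R) -> R) (d : A -> A -> R)
  (m : R) : A -> A -> R :=
  fun x y => row mu d x + row mu d y - d x y - total mu d + m.

Lemma metric_proximity_defect {A : Type} (mu : (A -> R) -> R) d m (x y z : A) :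
  let s := metric_proximity mu d m in
  s x y + s x z - s y z - s x x = d x x + d y z - d x y - d x z.
Proof. unfold metric_proximity; simpl; ring. Qed.

Section ProximityInequalities.

Context {A : Type} (mu : (A -> R) -> R) {d : A -> A -> R} (m : R).
Hypothesis Hd : is_metric d.

Lemma metric_proximity_triangle x y z :
  let s := metric_proximity mu d m in s x y + s x z - s y z <= s x x.
Proof.
  pose proof (metric_proximity_defect mu d m x y z) as Hdefect; simpl in *.
  rewrite (metric_refl Hd) in Hdefect.
  pose proof (metric_triangle Hd x y z); lra.
Qed.

Lemma metric_proximity_strict x y : x <> y ->
  let s := metric_proximity mu d m in s x y + s x y - s y y < s x x.
Proof.
  intro Hxy.
  pose proof (metric_proximity_defect mu d m x y y) as Hdefect; simpl in *.
  rewrite !(metric_refl Hd) in Hdefect.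
  pose proof (metric_pos Hd x y Hxy); lra.
Qed.

End ProximityInequalities.

Section MetricProximity.

Context {A : Type} {B1 : (A -> R) -> Prop} {mu : (A -> R) -> R}
  {B2 : (A -> A -> R) -> Prop} {d : A -> A -> R} (m : R).
Hypotheses (HB1 : linear_space1 B1) (Hmu : mean_functional B1 mu)
  (HB2 : space2 B1 mu B2) (HdB2 : B2 d).

Lemma metric_proximity_in_space2 : B2 (metric_proximity mu d m).
Proof.
  pose proof HB2 as [_ [Hconst [Hleft [Hright _]]]].
  pose proof (space2_row HB2 d HdB2) as Hrow.
  replace (metric_proximity mu d m) with
    (fun x y => row mu d x + row mu d y - d x y + (m - total mu d))
    by (do 2 (apply functional_extensionality; intro);
        unfold metric_proximity; ring).
  apply (space2_add HB2 _ (fun _ _ => m - total mu d)); [| apply Hconst].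
  apply (space2_sub HB2); [| exact HdB2].
  now apply (space2_add HB2); [apply Hleft | apply Hright].
Qed.

Lemma row_metric_proximity x : row mu (metric_proximity mu d m) x = m.
Proof.
  pose proof (space2_slice HB2 d HdB2) as Hdx.
  pose proof (space2_row HB2 d HdB2) as Hrow.
  unfold row at 1, metric_proximity.
  replace (fun y => row mu d x + row mu d y - d x y - total mu d + m) with
    (fun y => row mu d y - d x y + (row mu d x - total mu d + m))
    by (apply functional_extensionality; intro; ring).
  rewrite (mean_addr HB1 Hmu) by now apply (space1_sub HB1).
  rewrite (mean_sub Hmu) by auto.
  change (mu (d x)) with (row mu d x); unfold total; ring.
Qed.

End MetricProximity.

Theorem proposition2 (A : Type) (a0 : A) (m : R)
  (B1 : (A -> R) -> Prop) (mu : (A -> R) -> R) (B2 : (A -> A -> R) -> Prop)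
  (HB1 : linear_space1 B1) (Hmu : mean_functional B1 mu)
  (HB2 : space2 B1 mu B2)
  (d : A -> A -> R) (HdB2 : B2 d) (Hd : is_metric d) :
  sigma_proximity B2 mu m
    (fun x y => row mu d x + row mu d y - d x y - total mu d + m).
Proof.
  change (sigma_proximity B2 mu m (metric_proximity mu d m)).
  split; [| split; [| split]].
  - exact (metric_proximity_in_space2 m HB2 HdB2).
  - exact (row_metric_proximity m HB1 Hmu HB2 HdB2).
  - exact (metric_proximity_triangle mu m Hd).
  - exact (metric_proximity_strict mu m Hd).
Qed.
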